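(* Let $\mathcal{C}_1$ and $\mathcal{C}_2$ be any two disjoint maximal commuting classes of two-qubit Pauli operators ($d=4$). Then there exists a third maximal commuting class $\mathcal{C}_3'$ of Pauli operators, disjoint from $\mathcal{C}_1$ and $\mathcal{C}_2$, such that the common eigenbases of $\mathcal{C}_1,\mathcal{C}_2,\mathcal{C}_3'$ form a weakly unextendible set of three mutually unbiased bases in $\mathbb{C}^4$.
   Context: Two-qubit Pauli operators are the tensor products $P_1\otimes P_2$ with $P_k\in\{I,X,Y,Z\}$. A maximal commuting class in $d=4$ is a set of $3$ mutually commuting non-identity two-qubit Pauli operators. Two orthonormal bases of $\mathbb{C}^d$ are mutually unbiased if $|\langle a|b\rangle|=1/\sqrt d$ for all vectors $a$ of the first and $b$ of the second; common eigenbases of pairwise disjoint maximal commuting Pauli classes are mutually unbiased. A set of mutually unbiased bases obtained as common eigenbases of Pauli classes is weakly unextendible if there is no further basis, unbiased to all of them, that is the common eigenbasis of a maximal commuting class of Pauli operators. *)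

(* Two-qubit Pauli operators as concrete 4x4 complex
   matrices over algC; bases of C^4 as 4x4 matrices whose columns are the
   basis vectors. *)
From HB Require Import structures.
From mathcomp Require Import all_boot all_order all_algebra all_field.
From mathcomp Require Import mxtens.
Set Implicit Arguments. Unset Strict Implicit. Unset Printing Implicit Defensive.
Import Order.TTheory GRing.Theory Num.Theory.
Local Open Scope ring_scope.

(* single-qubit Paulis: 0 = I, 1 = X, 2 = Y, 3 = Z *)
Definition pauli1 (k : 'I_4) : 'M[algC]_2 :=
  match val k with
  | 0%N => 1%:M
  | 1%N => \matrix_(i < 2, j < 2) (if i == j then 0 else 1)
  | 2%N => \matrix_(i < 2, j < 2)
             (if i == j then 0 else if (val i == 0%N) then - 'i else 'i)
  | _ => \matrix_(i < 2, j < 2)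
             (if i == j then (if val i == 0%N then 1 else -1) else 0)
  end.

Definition pauli_label := ('I_4 * 'I_4)%type.

Definition pauli (p : pauli_label) : 'M[algC]_4 :=
  (pauli1 p.1 *t pauli1 p.2 : 'M_(2 * 2)).

Definition identity_label : pauli_label := (ord0, ord0).

Definition max_commuting_class (C : {set pauli_label}) : Prop :=
  #|C| = 3%N /\ identity_label \notin C /\
  (forall p q, p \in C -> q \in C -> pauli p *m pauli q = pauli q *m pauli p).

Definition adjmx (n m : nat) (A : 'M[algC]_(n, m)) : 'M[algC]_(m, n) :=
  (map_mx (fun x : algC => x^*) A)^T.

Definition inner (a b : 'cV[algC]_4) : algC := (adjmx a *m b) 0 0.

Definition orthonormal_basis (B : 'M[algC]_4) : Prop := adjmx B *m B = 1%:M.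

Definition common_eigenbasis (C : {set pauli_label}) (B : 'M[algC]_4) : Prop :=
  orthonormal_basis B /\
  forall p, p \in C -> forall j : 'I_4,
    exists lambda : algC, pauli p *m col j B = lambda *: col j B.

Definition unbiased (A B : 'M[algC]_4) : Prop :=
  forall i j : 'I_4, `|inner (col i A) (col j B)| = (sqrtC 4%:R)^-1.

Definition mutually_unbiased (s : seq 'M[algC]_4) : Prop :=
  forall i j : nat, (i < size s)%N -> (j < size s)%N -> i <> j ->
    unbiased (nth 0 s i) (nth 0 s j).

Definition weakly_unextendible (s : seq 'M[algC]_4) : Prop :=
  mutually_unbiased s /\
  ~ (exists (C : {set pauli_label}) (B : 'M[algC]_4),
        max_commuting_class C /\ common_eigenbasis C B /\
        forall A, A \in s -> unbiased A B).

From HB Require Import structures.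
From mathcomp Require Import all_boot all_order all_algebra all_field.
From mathcomp Require Import mxtens ring.
Set Implicit Arguments. Unset Strict Implicit. Unset Printing Implicit Defensive.
Import Order.TTheory GRing.Theory Num.Theory.
Local Open Scope ring_scope.

(* There are exactly fifteen maximal commuting classes of two-qubit Paulis,
   and each has a common eigenbasis made of Gaussian-integer vectors (up to
   normalisation).  The eigenvalues of the three operators of a class
   separate its four eigenvectors, so every common eigenbasis of the class is
   that basis up to order and phases.  Hence bases of disjoint classes are
   unbiased, which is a finite computation.  Bases of classes sharing a
   non-identity Pauli P never are: if all overlaps with one fixed vector of
   the second basis were nonzero, every vector of the first basis would be an
   eigenvector of P for one and the same eigenvalue, making P scalar.  What
   remains is a finite search: any two disjoint classes extend by a third
   class disjoint from both such that each of the fifteen classes meets one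
   of the three. *)

(* [enum 'I_n] does not reduce under [vm_compute] (it goes through the opaque
   [idP]), so the finite checks below quantify over these lists instead. *)
Definition ord_of_nat n m : option 'I_n :=
  if Bool.bool_dec (m < n)%N true is left lt_mn then Some (Ordinal lt_mn) else None.

Definition ords n : seq 'I_n := pmap (@ord_of_nat n) (iota 0 n).

Definition labels : seq pauli_label := [seq (a, b) | a <- ords 4, b <- ords 4].

Lemma ord_of_natE n m : ord_of_nat n m = insub m.
Proof.
rewrite /ord_of_nat; case: Bool.bool_dec => [lt_mn | /negP/negbTE ge_mn].
  by rewrite insubT; congr Some; apply: val_inj.
by rewrite insubF.
Qed.

Lemma ords_enum n : ords n = enum 'I_n.
Proof.
apply: (inj_map val_inj); rewrite val_enum_ord /ords (eq_pmap (@ord_of_natE n)).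
exact: val_ord_enum.
Qed.

Lemma mem_ords n (i : 'I_n) : i \in ords n.
Proof. by rewrite ords_enum mem_enum. Qed.

Lemma mem_labels p : p \in labels.
Proof. by case: p => a b; apply/allpairsP; exists (a, b); rewrite !mem_ords. Qed.

Lemma labels_uniq : uniq labels.
Proof.
by rewrite allpairs_uniq ?ords_enum ?enum_uniq // => -[a b] [a' b'] _ _ [-> ->].
Qed.

Section CompleteSeq.

Variables (T : eqType) (s : seq T).
Hypothesis mem_s : forall x, x \in s.

Lemma all_completeP (P : pred T) : reflect (forall x, P x) (all P s).
Proof. by apply: (iffP allP) => P_s x *; apply: P_s. Qed.

Lemma has_completeP (P : pred T) : reflect (exists x, P x) (has P s).
Proof. by apply: (iffP hasP) => [[x _ Px] | [x Px]]; exists x. Qed.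

End CompleteSeq.

Lemma all_ordsP n (P : pred 'I_n) : reflect (forall i, P i) (all P (ords n)).
Proof. exact: all_completeP (@mem_ords n) P. Qed.

Lemma has_ordsP n (P : pred 'I_n) : reflect (exists i, P i) (has P (ords n)).
Proof. exact: has_completeP (@mem_ords n) P. Qed.

Lemma all_labelsP (P : pred pauli_label) : reflect (forall p, P p) (all P labels).
Proof. exact: all_completeP mem_labels P. Qed.

Lemma has_labelsP (P : pred pauli_label) : reflect (exists p, P p) (has P labels).
Proof. exact: has_completeP mem_labels P. Qed.

(** * Gaussian integers *)

Definition gauss := (int * int)%type.
Definition gauss0 : gauss := (0, 0).
Definition gadd (x y : gauss) : gauss := (x.1 + y.1, x.2 + y.2).
Definition gmul (x y : gauss) : gauss := (x.1 * y.1 - x.2 * y.2, x.1 * y.2 + x.2 * y.1).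
Definition gconj (x : gauss) : gauss := (x.1, - x.2).
Definition gnorm (x : gauss) : int := x.1 * x.1 + x.2 * x.2.
Definition gsum n (F : 'I_n -> gauss) : gauss := foldr (fun i => gadd (F i)) gauss0 (ords n).

Definition gaussC (x : gauss) : algC := x.1%:~R + x.2%:~R * 'i.

Lemma gaussC0 : gaussC gauss0 = 0.
Proof. by rewrite /gaussC /= mul0r addr0. Qed.

Lemma gaussC_int z : gaussC (z, 0) = z%:~R.
Proof. by rewrite /gaussC /= mul0r addr0. Qed.

Lemma gaussCD x y : gaussC (gadd x y) = gaussC x + gaussC y.
Proof. by rewrite /gaussC /= !intrD mulrDl addrACA. Qed.

Lemma gaussCM x y : gaussC (gmul x y) = gaussC x * gaussC y.
Proof.
rewrite /gaussC /= intrB intrD !intrM.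
set a := x.1%:~R; set b := x.2%:~R; set c := y.1%:~R; set d := y.2%:~R.
have -> : (a + b * 'i) * (c + d * 'i) = a * c + b * d * ('i * 'i) + (a * d + b * c) * 'i.
  by ring.
by rewrite mulCii mulrN1.
Qed.

Lemma gaussC_conj x : gaussC (gconj x) = (gaussC x)^*.
Proof.
rewrite /gaussC /= rmorphD rmorphM !rmorph_int intrN mulNr -mulrN.
by rewrite -conjCi.
Qed.

Lemma gaussC_sum n (F : 'I_n -> gauss) : gaussC (gsum F) = \sum_i gaussC (F i).
Proof.
rewrite -big_enum -ords_enum /gsum.
by elim: (ords n) => [|i s IHs]; rewrite ?big_nil ?gaussC0 // big_cons gaussCD IHs.
Qed.

Lemma gaussC_inj : injective gaussC.
Proof.
have [Re_g Im_g] : (forall x, 'Re (gaussC x) = x.1%:~R) /\ (forall x, 'Im (gaussC x) = x.2%:~R).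
  by split=> x; rewrite /gaussC mulrC ?Re_rect ?Im_rect ?realz.
move=> [a b] [a' b'] eq_ab.
have := Re_g (a, b); have := Im_g (a, b).
by rewrite eq_ab Re_g Im_g /= => /intr_inj -> /intr_inj ->.
Qed.

Lemma gaussC_normCK x : `|gaussC x| ^+ 2 = (gnorm x)%:~R.
Proof.
have -> : (gnorm x)%:~R = gaussC (gmul x (gconj x)).
  by rewrite -gaussC_int /gmul /gconj /gnorm /=; congr gaussC; congr pair; ring.
by rewrite gaussCM gaussC_conj normCK.
Qed.

(** * Integer model of the Pauli matrices *)

Definition pauli1_gauss (k : 'I_4) (i j : 'I_2) : gauss :=
  match val k with
  | 0%N => if i == j then (1, 0) else gauss0
  | 1%N => if i == j then gauss0 else (1, 0)
  | 2%N => if i == j then gauss0 else if val i == 0%N then (0, -1) else (0, 1)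
  | _ => if i == j then (if val i == 0%N then (1, 0) else (-1, 0)) else gauss0
  end.

Definition pauli_gauss (p : pauli_label) (i j : 'I_4) : gauss :=
  let (i1, i2) := @mxtens_unindex 2 2 i in let (j1, j2) := @mxtens_unindex 2 2 j in
  gmul (pauli1_gauss p.1 i1 j1) (pauli1_gauss p.2 i2 j2).

Definition gmulmx (A B : 'I_4 -> 'I_4 -> gauss) i j : gauss :=
  gsum (fun k => gmul (A i k) (B k j)).

Definition pauli_commb (p q : pauli_label) : bool :=
  all (fun i => all (fun j =>
    gmulmx (pauli_gauss p) (pauli_gauss q) i j == gmulmx (pauli_gauss q) (pauli_gauss p) i j)
  (ords 4)) (ords 4).

Lemma pauli1E k i j : pauli1 k i j = gaussC (pauli1_gauss k i j).
Proof.
case: k => [[|[|[|[|k]]]] lt_k4] //; rewrite /pauli1 /pauli1_gauss /= ?mxE;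
by case: i => [[|[|i]] ?] //; case: j => [[|[|j]] ?]; rewrite //= ?gaussC0 ?gaussC_int
   /gaussC //= ?mul1r ?mulN1r ?add0r.
Qed.

Lemma pauliE p i j : pauli p i j = gaussC (pauli_gauss p i j).
Proof.
rewrite /pauli /tensmx mxE /pauli_gauss.
by case: mxtens_unindex => i1 i2; case: mxtens_unindex => j1 j2; rewrite gaussCM !pauli1E.
Qed.

Lemma pauli_mulE p q i j :
  (pauli p *m pauli q) i j = gaussC (gmulmx (pauli_gauss p) (pauli_gauss q) i j).
Proof. by rewrite mxE gaussC_sum; apply: eq_bigr => k _; rewrite gaussCM !pauliE. Qed.

Lemma pauli_commP p q :
  reflect (pauli p *m pauli q = pauli q *m pauli p) (pauli_commb p q).
Proof.
apply: (iffP (all_ordsP _)) => [comm_pq | comm_pq i].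
  by apply/matrixP => i j; rewrite !pauli_mulE; move/all_ordsP/(_ j)/eqP: (comm_pq i) => ->.
by apply/all_ordsP => j; apply/eqP/gaussC_inj; rewrite -!pauli_mulE comm_pq.
Qed.

Fact pauli_hermitian_check :
  all (fun p => all (fun i => all (fun j => gconj (pauli_gauss p j i) == pauli_gauss p i j)
    (ords 4)) (ords 4)) labels.
Proof. by vm_compute. Qed.

Fact pauli_nonscalar_check :
  all (fun p => (p != identity_label) ==> has (fun i => has (fun j =>
      (i != j) && (pauli_gauss p i j != gauss0) || (pauli_gauss p i i != pauli_gauss p j j))
    (ords 4)) (ords 4)) labels.
Proof. by vm_compute. Qed.

Lemma adjmx_pauli p : adjmx (pauli p) = pauli p.
Proof.
apply/matrixP => i j.
have -> : adjmx (pauli p) i j = (pauli p j i)^* by rewrite /adjmx !mxE.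
rewrite !pauliE -gaussC_conj; congr gaussC; apply/eqP.
exact: all_ordsP _ (all_ordsP _ (all_labelsP _ pauli_hermitian_check p) i) j.
Qed.

Lemma pauli_neq_scalar p : p != identity_label -> forall a : algC, pauli p != a%:M.
Proof.
move=> p_id a; have := all_labelsP _ pauli_nonscalar_check p; rewrite p_id.
move=> /has_ordsP[i /has_ordsP[j]]; apply: contraTN => /eqP pa.
have entry k l : pauli_gauss p k l = if k == l then pauli_gauss p i i else gauss0.
  apply: gaussC_inj; rewrite -pauliE pa mxE.
  by case: eqVneq; rewrite ?gaussC0 ?mulr0n // -pauliE pa mxE eqxx.
by rewrite (entry i j) (entry j j) !eqxx; case: eqVneq => //= _; rewrite eqxx.
Qed.

(** * The fifteen maximal commuting classes *)

(* Class [c] consists of the labels (P1, P2) listed in row [c], coding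
   I, X, Y, Z as 0, 1, 2, 3. *)
Definition class_table : seq (seq (nat * nat)) := [::
  [:: (0,1); (1,0); (1,1)];
  [:: (0,1); (2,0); (2,1)];
  [:: (0,1); (3,0); (3,1)];
  [:: (0,2); (1,0); (1,2)];
  [:: (0,2); (2,0); (2,2)];
  [:: (0,2); (3,0); (3,2)];
  [:: (0,3); (1,0); (1,3)];
  [:: (0,3); (2,0); (2,3)];
  [:: (0,3); (3,0); (3,3)];
  [:: (1,1); (2,2); (3,3)];
  [:: (1,1); (2,3); (3,2)];
  [:: (1,2); (2,1); (3,3)];
  [:: (1,2); (2,3); (3,1)];
  [:: (1,3); (2,1); (3,2)];
  [:: (1,3); (2,2); (3,1)]].

Definition in_class (c : 'I_15) (p : pauli_label) : bool :=
  (val p.1, val p.2) \in nth [::] class_table c.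

Definition class_members (c : 'I_15) : seq pauli_label := [seq p <- labels | in_class c p].

Definition pauli_class (c : 'I_15) : {set pauli_label} := [set p | in_class c p].

Lemma mem_class_members c p : (p \in class_members c) = in_class c p.
Proof. by rewrite mem_filter mem_labels andbT. Qed.

Lemma card_pauli_class c : #|pauli_class c| = size (class_members c).
Proof.
rewrite cardsE cardE; apply/perm_size/uniq_perm.
- exact: enum_uniq.
- by rewrite filter_uniq ?labels_uniq.
- by move=> p; rewrite mem_enum mem_class_members.
Qed.

Definition class_disjoint (c c' : 'I_15) : bool :=
  all (fun p => ~~ in_class c' p) (class_members c).

Lemma class_disjointP c c' :
  reflect (pauli_class c :&: pauli_class c' = set0) (class_disjoint c c').
Proof.
apply: (iffP allP) => [disj | disj p].
  apply/setP => p; rewrite !inE; apply/negbTE/andP => -[cp].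
  by apply/negP/disj; rewrite mem_class_members.
by rewrite mem_class_members => cp; have := in_set0 p; rewrite -disj !inE cp => /negbT.
Qed.

Lemma class_disjointC c c' : class_disjoint c c' = class_disjoint c' c.
Proof.
by apply/class_disjointP/class_disjointP; rewrite setIC.
Qed.

Fact pauli_class_check :
  all (fun c => let S := class_members c in
    [&& size S == 3, identity_label \notin S & all (fun p => all (pauli_commb p) S) S])
  (ords 15).
Proof. by vm_compute. Qed.

Lemma pauli_class_max c : max_commuting_class (pauli_class c).
Proof.
have /and3P[/eqP card3 not_id /allP comm] := all_ordsP _ pauli_class_check c.
split; first by rewrite card_pauli_class.
split; first by rewrite inE -mem_class_members.
move=> p q; rewrite !inE -!mem_class_members => cp cq; apply/pauli_commP.
exact: (allP (comm p cp)).
Qed.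

Definition commutant (x : pauli_label) : seq pauli_label :=
  [seq y <- labels | (y != identity_label) && pauli_commb x y].

Lemma mem_commutant x y : (y \in commutant x) = (y != identity_label) && pauli_commb x y.
Proof. by rewrite mem_filter mem_labels andbT. Qed.

Fact commuting_triple_check :
  all (fun x => let Cx := commutant x in all (fun y => all (fun z =>
      [&& x != identity_label, uniq [:: x; y; z] & pauli_commb y z] ==>
      has (fun c => all (fun p => in_class c p == (p \in [:: x; y; z])) labels) (ords 15))
    Cx) Cx) labels.
Proof. by vm_compute. Qed.

Lemma max_commuting_class_table C :
  max_commuting_class C -> exists c, C = pauli_class c.
Proof.
case=> card3 [not_id comm]; have := enum_uniq C; have := mem_enum C.
rewrite cardE in card3; case: (enum C) card3 => [|x [|y [|z []]]] // _ memC uniq_C.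
have nidC p : p \in [:: x; y; z] -> p != identity_label.
  by rewrite memC => pC; apply: contraNneq not_id => <-.
have commC p q : p \in [:: x; y; z] -> q \in [:: x; y; z] -> pauli_commb p q.
  by rewrite !memC => pC qC; apply/pauli_commP/comm.
have [xC yC zC] : [/\ x \in [:: x; y; z], y \in [:: x; y; z] & z \in [:: x; y; z]].
  by rewrite !inE !eqxx !orbT.
have commutant_x p : p \in [:: x; y; z] -> p \in commutant x.
  by move=> pC; rewrite mem_commutant nidC ?commC.
have := allP (allP (all_labelsP _ commuting_triple_check x) y (commutant_x y yC)) z
  (commutant_x z zC).
rewrite nidC // uniq_C commC // => /has_ordsP[c /all_labelsP defc].
by exists c; apply/setP => p; rewrite inE -memC (eqP (defc p)).
Qed.

(** * The eigenbases of the classes *)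

(* The Gaussian integers 0, 1, -1, i, -i are coded as 0, 1, 2, 3, 4; row [c]
   lists four orthogonal, unnormalised common eigenvectors of class [c]. *)
Definition gauss_of_code (d : nat) : gauss :=
  nth gauss0 [:: gauss0; (1, 0); (-1, 0); (0, 1); (0, -1)] d.

Definition eigvec_table : seq (seq (seq nat)) := [::
  [:: [:: 1; 1; 1; 1]; [:: 1; 1; 2; 2]; [:: 1; 2; 1; 2]; [:: 1; 2; 2; 1]];
  [:: [:: 1; 1; 3; 3]; [:: 1; 1; 4; 4]; [:: 1; 2; 3; 4]; [:: 1; 2; 4; 3]];
  [:: [:: 1; 1; 0; 0]; [:: 0; 0; 1; 1]; [:: 1; 2; 0; 0]; [:: 0; 0; 1; 2]];
  [:: [:: 1; 3; 1; 3]; [:: 1; 3; 2; 4]; [:: 1; 4; 1; 4]; [:: 1; 4; 2; 3]];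
  [:: [:: 1; 3; 3; 2]; [:: 1; 3; 4; 1]; [:: 1; 4; 3; 1]; [:: 1; 4; 4; 2]];
  [:: [:: 1; 3; 0; 0]; [:: 0; 0; 1; 3]; [:: 1; 4; 0; 0]; [:: 0; 0; 1; 4]];
  [:: [:: 1; 0; 1; 0]; [:: 1; 0; 2; 0]; [:: 0; 1; 0; 1]; [:: 0; 1; 0; 2]];
  [:: [:: 1; 0; 3; 0]; [:: 1; 0; 4; 0]; [:: 0; 1; 0; 3]; [:: 0; 1; 0; 4]];
  [:: [:: 1; 0; 0; 0]; [:: 0; 0; 1; 0]; [:: 0; 1; 0; 0]; [:: 0; 0; 0; 1]];
  [:: [:: 0; 1; 1; 0]; [:: 1; 0; 0; 1]; [:: 1; 0; 0; 2]; [:: 0; 1; 2; 0]];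
  [:: [:: 1; 3; 3; 1]; [:: 1; 4; 4; 1]; [:: 1; 4; 3; 2]; [:: 1; 3; 4; 2]];
  [:: [:: 1; 0; 0; 3]; [:: 0; 1; 4; 0]; [:: 0; 1; 3; 0]; [:: 1; 0; 0; 4]];
  [:: [:: 1; 2; 3; 3]; [:: 1; 1; 4; 3]; [:: 1; 1; 3; 4]; [:: 1; 2; 4; 4]];
  [:: [:: 1; 4; 1; 3]; [:: 1; 3; 1; 4]; [:: 1; 3; 2; 3]; [:: 1; 4; 2; 4]];
  [:: [:: 1; 1; 1; 2]; [:: 1; 2; 1; 1]; [:: 1; 2; 2; 2]; [:: 1; 1; 2; 1]]].

Definition eigvec (c : 'I_15) (k i : 'I_4) : gauss :=
  gauss_of_code (nth 0%N (nth [::] (nth [::] eigvec_table c) k) i).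

Definition ginner (v w : 'I_4 -> gauss) : gauss := gsum (fun i => gmul (gconj (v i)) (w i)).

Definition eigvec_norm c k : int := (ginner (eigvec c k) (eigvec c k)).1.

Definition pauli_gapply p (v : 'I_4 -> gauss) i : gauss :=
  gsum (fun k => gmul (pauli_gauss p i k) (v k)).

(* Paulis square to the identity, so an eigenvalue other than 1 is -1. *)
Definition eigval c p k : int :=
  if all (fun i => pauli_gapply p (eigvec c k) i == eigvec c k i) (ords 4) then 1 else -1.

Fact eigvec_norm_check : all (fun c => all (fun k => 0 < eigvec_norm c k) (ords 4)) (ords 15).
Proof. by vm_compute. Qed.

Fact eigvec_orthogonal_check :
  all (fun c => all (fun k => all (fun m =>
    ginner (eigvec c k) (eigvec c m) == if k == m then (eigvec_norm c k, 0) else gauss0)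
  (ords 4)) (ords 4)) (ords 15).
Proof. by vm_compute. Qed.

Fact eigval_separates_check :
  all (fun c => all (fun k => all (fun m =>
    (k != m) ==> has (fun p => eigval c p k != eigval c p m) (class_members c))
  (ords 4)) (ords 4)) (ords 15).
Proof. by vm_compute. Qed.

Fact eigvec_eigen_check :
  all (fun c => all (fun p => all (fun k => all (fun i =>
    pauli_gapply p (eigvec c k) i == gmul (eigval c p k, 0) (eigvec c k i))
  (ords 4)) (ords 4)) (class_members c)) (ords 15).
Proof. by vm_compute. Qed.

Lemma eigvec_norm_gt0 c k : 0 < eigvec_norm c k.
Proof. exact: all_ordsP _ (all_ordsP _ eigvec_norm_check c) k. Qed.

Lemma eigvec_orthogonal c k m :
  ginner (eigvec c k) (eigvec c m) = if k == m then (eigvec_norm c k, 0) else gauss0.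
Proof. exact/eqP/(all_ordsP _ (all_ordsP _ (all_ordsP _ eigvec_orthogonal_check c) k) m). Qed.

Lemma eigval_separates c k m : k != m ->
  exists2 p, in_class c p & eigval c p k != eigval c p m.
Proof.
move=> nkm; have /implyP/(_ nkm)/hasP[p] :=
  all_ordsP _ (all_ordsP _ (all_ordsP _ eigval_separates_check c) k) m.
by rewrite mem_class_members; exists p.
Qed.

Lemma eigvec_eigen c p k i : in_class c p ->
  pauli_gapply p (eigvec c k) i = gmul (eigval c p k, 0) (eigvec c k i).
Proof.
rewrite -mem_class_members => cp; apply/eqP.
exact: all_ordsP _ (all_ordsP _ (allP (all_ordsP _ eigvec_eigen_check c) p cp) k) i.
Qed.

Definition inv_sqrt (z : int) : algC := (sqrtC z%:~R)^-1.

Lemma inv_sqrt_ge0 z : 0 <= z -> 0 <= inv_sqrt z.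
Proof. by move=> z_ge0; rewrite invr_ge0 sqrtC_ge0 ler0z. Qed.

Lemma inv_sqrt_conj z : 0 <= z -> (inv_sqrt z)^* = inv_sqrt z.
Proof. by move/inv_sqrt_ge0/ger0_real/conj_Creal. Qed.

Lemma inv_sqrtK z : 0 < z -> inv_sqrt z ^+ 2 * z%:~R = 1.
Proof. by move=> z_gt0; rewrite exprVn sqrtCK mulVf // intr_eq0 gt_eqF. Qed.

Definition class_basis c : 'M[algC]_4 :=
  \matrix_(i, j) (inv_sqrt (eigvec_norm c j) * gaussC (eigvec c j i)).

Lemma adjmxM m n q (A : 'M[algC]_(m, n)) (B : 'M[algC]_(n, q)) :
  adjmx (A *m B) = adjmx B *m adjmx A.
Proof.
apply/matrixP => i j; rewrite !mxE rmorph_sum.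
by apply: eq_bigr => k _; rewrite !mxE rmorphM mulrC.
Qed.

Lemma inner_col (A B : 'M[algC]_4) i j : inner (col i A) (col j B) = (adjmx A *m B) i j.
Proof. by rewrite /inner !mxE; apply: eq_bigr => k _; rewrite !mxE. Qed.

Lemma innerZr a b l : inner a (l *: b) = l * inner a b.
Proof. by rewrite /inner !mxE mulr_sumr; apply: eq_bigr => k _; rewrite !mxE mulrCA. Qed.

Lemma innerZl a b l : inner (l *: a) b = l^* * inner a b.
Proof. by rewrite /inner !mxE mulr_sumr; apply: eq_bigr => k _; rewrite !mxE rmorphM mulrA. Qed.

Lemma inner_conj a b : inner b a = (inner a b)^*.
Proof.
rewrite /inner !mxE rmorph_sum; apply: eq_bigr => k _.
by rewrite !mxE rmorphM /= conjCK mulrC.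
Qed.

Lemma inner_selfadj (M : 'M[algC]_4) a b :
  adjmx M = M -> inner a (M *m b) = inner (M *m a) b.
Proof. by move=> adjM; rewrite /inner adjmxM adjM mulmxA. Qed.

Lemma orthonormal_expansion (E : 'M[algC]_4) a :
  orthonormal_basis E -> a = \sum_k inner (col k E) a *: col k E.
Proof.
move=> /mulmx1C EE; apply/matrixP => i z; rewrite [z]ord1.
rewrite -{1}[a]mul1mx -EE -mulmxA summxE mxE; apply: eq_bigr => k _.
rewrite !mxE mulrC /inner !mxE; congr (_ * _).
by apply: eq_bigr => l _; rewrite !mxE.
Qed.

Lemma unbiased_sym A B : unbiased A B -> unbiased B A.
Proof. by move=> unbAB i j; rewrite inner_conj norm_conjC. Qed.

Lemma mutually_unbiased3 A B C :
  unbiased A B -> unbiased A C -> unbiased B C -> mutually_unbiased [:: A; B; C].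
Proof.
move=> AB AC BC [|[|[|i]]] [|[|[|j]]] //= *; exact: unbiased_sym.
Qed.

Lemma inner_class_basis c c' k m :
  inner (col k (class_basis c)) (col m (class_basis c')) =
  inv_sqrt (eigvec_norm c k) * inv_sqrt (eigvec_norm c' m)
    * gaussC (ginner (eigvec c k) (eigvec c' m)).
Proof.
rewrite /inner !mxE gaussC_sum mulr_sumr; apply: eq_bigr => i _.
rewrite !mxE rmorphM /= inv_sqrt_conj ?ltW ?eigvec_norm_gt0 // gaussCM gaussC_conj.
by rewrite mulrACA.
Qed.

Lemma class_basis_orthonormal c : orthonormal_basis (class_basis c).
Proof.
apply/matrixP => k m; rewrite -inner_col inner_class_basis eigvec_orthogonal mxE.
case: eqP => [<- | _]; last by rewrite gaussC0 mulr0.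
by rewrite gaussC_int -expr2 inv_sqrtK ?eigvec_norm_gt0.
Qed.

Lemma class_basis_eigen c p k : in_class c p ->
  pauli p *m col k (class_basis c) = (eigval c p k)%:~R *: col k (class_basis c).
Proof.
move=> cp; apply/matrixP => i z; rewrite !mxE.
transitivity (inv_sqrt (eigvec_norm c k) * gaussC (pauli_gapply p (eigvec c k) i)).
  rewrite gaussC_sum mulr_sumr; apply: eq_bigr => l _.
  by rewrite pauliE !mxE gaussCM mulrCA.
by rewrite eigvec_eigen // gaussCM gaussC_int mulrCA.
Qed.

Lemma class_basis_common c : common_eigenbasis (pauli_class c) (class_basis c).
Proof.
split; first exact: class_basis_orthonormal.
by move=> p; rewrite inE => cp k; exists (eigval c p k)%:~R; apply: class_basis_eigen.
Qed.

Lemma eigval_overlap c p k a l : in_class c p -> pauli p *m a = l *: a ->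
  inner (col k (class_basis c)) a != 0 -> l = (eigval c p k)%:~R.
Proof.
move=> cp eig_a nz_a; apply: (mulIf nz_a).
rewrite -innerZr -eig_a inner_selfadj ?adjmx_pauli // class_basis_eigen //.
by rewrite innerZl rmorph_int.
Qed.

Lemma class_eigenvector_phase c B i : common_eigenbasis (pauli_class c) B ->
  exists k alpha, col i B = alpha *: col k (class_basis c) /\ `|alpha| = 1.
Proof.
move=> [orthoB eigB]; set a := col i B.
have norm_a : inner a a = 1 by rewrite inner_col orthoB mxE eqxx.
pose coord k := inner (col k (class_basis c)) a.
have expand : a = \sum_k coord k *: col k (class_basis c).
  exact: orthonormal_expansion (class_basis_orthonormal c).
have [k0 nz_k0] : exists k, coord k != 0.
  apply/existsP; apply: contraT => /existsPn coord0.
  have a0 : a = 0 by rewrite expand big1 // => k _; rewrite (eqP (negPn (coord0 k))) scale0r.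
  by move: norm_a; rewrite a0 /inner mulmx0 mxE => /eqP; rewrite eq_sym oner_eq0.
have coord0 k : k != k0 -> coord k = 0.
  move=> nk; have [p cp sep] := eigval_separates c nk.
  have pC : p \in pauli_class c by rewrite inE.
  have [l eig_a] := eigB p pC i.
  apply/eqP; apply: contraNT sep => nz_k; apply/eqP/(@intr_inj algC).
  by rewrite -(eigval_overlap cp eig_a nz_k) -(eigval_overlap cp eig_a nz_k0).
have a_k0 : a = coord k0 *: col k0 (class_basis c).
  by rewrite {1}expand (bigD1 k0) //= big1 ?addr0 // => k nk; rewrite coord0 ?scale0r.
exists k0, (coord k0); split=> //.
move: norm_a; rewrite a_k0 innerZl innerZr inner_col class_basis_orthonormal mxE eqxx.
by rewrite mulr1 -normCKC => /eqP; rewrite (sqrp_eq1 (normr_ge0 _)) => /eqP.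
Qed.

(** * Unbiasedness and its failure *)

Fact unbiased_check :
  all (fun c => all (fun c' => class_disjoint c c' ==> all (fun k => all (fun m =>
    4 * gnorm (ginner (eigvec c k) (eigvec c' m)) == eigvec_norm c k * eigvec_norm c' m)
  (ords 4)) (ords 4)) (ords 15)) (ords 15).
Proof. by vm_compute. Qed.

Lemma class_basis_unbiased c c' :
  class_disjoint c c' -> unbiased (class_basis c) (class_basis c').
Proof.
move=> disj k m; have /all_ordsP/(_ k)/all_ordsP/(_ m)/eqP norm_overlap :=
  implyP (all_ordsP _ (all_ordsP _ unbiased_check c) c') disj.
have [N_gt0 N'_gt0] := (eigvec_norm_gt0 c k, eigvec_norm_gt0 c' m).
apply/eqP; rewrite -(eqrXn2 (ltn0Sn 1)) ?normr_ge0 ?invr_ge0 ?sqrtC_ge0 ?ler0n //.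
rewrite exprVn sqrtCK inner_class_basis !normrM !exprMn gaussC_normCK; apply/eqP.
rewrite !ger0_norm ?inv_sqrt_ge0 ?ltW //.
have -> : (gnorm (ginner (eigvec c k) (eigvec c' m)))%:~R =
    (eigvec_norm c k)%:~R * (eigvec_norm c' m)%:~R / 4%:R :> algC.
  by rewrite -intrM -norm_overlap intrM mulrC mulKf ?pnatr_eq0.
transitivity (inv_sqrt (eigvec_norm c k) ^+ 2 * (eigvec_norm c k)%:~R
  * (inv_sqrt (eigvec_norm c' m) ^+ 2 * (eigvec_norm c' m)%:~R) / 4%:R); first by ring.
by rewrite !inv_sqrtK // !mul1r.
Qed.

Lemma class_eigenbases_unbiased c c' A B : class_disjoint c c' ->
  common_eigenbasis (pauli_class c) A -> common_eigenbasis (pauli_class c') B ->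
  unbiased A B.
Proof.
move=> disj eigA eigB i j.
have [k [alpha [-> norm_alpha]]] := class_eigenvector_phase i eigA.
have [m [beta [-> norm_beta]]] := class_eigenvector_phase j eigB.
rewrite innerZl innerZr !normrM norm_conjC norm_alpha norm_beta !mul1r.
exact: class_basis_unbiased.
Qed.

Lemma eigenbasis_not_unbiased (M A B : 'M[algC]_4) :
  adjmx M = M -> (forall a, M != a%:M) -> orthonormal_basis A ->
  (forall j, exists l, M *m col j A = l *: col j A) ->
  (exists l, M *m col 0 B = l *: col 0 B) -> ~ unbiased A B.
Proof.
move=> adjM M_nonscalar orthoA eigA [l eigB] unbAB.
have eigA_l j : M *m col j A = l^* *: col j A.
  have [m eig_m] := eigA j.
  have nz : inner (col j A) (col 0 B) != 0.
    by rewrite -normr_eq0 unbAB invr_eq0 sqrtC_eq0 pnatr_eq0.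
  suff m_l : m = l^* by rewrite eig_m m_l.
  apply/(canRL conjCK)/(mulIf nz).
  by rewrite -innerZl -eig_m -inner_selfadj // eigB innerZr.
have MA : M *m A = l^* *: A.
  apply/matrixP => i j; move/matrixP/(_ i 0): (eigA_l j); rewrite !mxE => <-.
  by apply: eq_bigr => k _; rewrite mxE.
apply/(negP (M_nonscalar l^*))/eqP.
by rewrite -[M]mulmx1 -(mulmx1C orthoA) mulmxA MA -scalemxAl (mulmx1C orthoA) scalemx1.
Qed.

Lemma meeting_classes_biased c c' p A B : in_class c p -> in_class c' p ->
  common_eigenbasis (pauli_class c) A -> common_eigenbasis (pauli_class c') B ->
  ~ unbiased A B.
Proof.
move=> cp c'p [orthoA eigA] [_ eigB].
have p_id : p != identity_label.
  by have [_ [not_id _]] := pauli_class_max c; apply: contraNneq not_id => <-; rewrite inE.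
apply: (eigenbasis_not_unbiased (adjmx_pauli p) (pauli_neq_scalar p_id) orthoA).
- by apply: eigA; rewrite inE.
- by apply: eigB; rewrite inE.
Qed.

Fact third_class_check :
  all (fun c1 => all (fun c2 => class_disjoint c1 c2 ==> has (fun c3 =>
    [&& class_disjoint c3 c1, class_disjoint c3 c2
      & all (fun c => has (fun p => [|| in_class c1 p, in_class c2 p | in_class c3 p])
          (class_members c)) (ords 15)])
  (ords 15)) (ords 15)) (ords 15).
Proof. by vm_compute. Qed.

Lemma unextendible_third_class c1 c2 : class_disjoint c1 c2 ->
  exists c3, [/\ class_disjoint c3 c1, class_disjoint c3 c2 &
    forall c, exists2 p, in_class c p & [|| in_class c1 p, in_class c2 p | in_class c3 p]].
Proof.
move=> disj; have /has_ordsP[c3 /and3P[d31 d32 /all_ordsP meets]] :=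
  implyP (all_ordsP _ (all_ordsP _ third_class_check c1) c2) disj.
exists c3; split=> // c; have /hasP[p] := meets c.
by rewrite mem_class_members; exists p.
Qed.

Theorem corollary1 (C1 C2 : {set pauli_label}) :
  max_commuting_class C1 -> max_commuting_class C2 -> C1 :&: C2 = set0 ->
  exists C3 : {set pauli_label},
    [/\ max_commuting_class C3, C3 :&: C1 = set0, C3 :&: C2 = set0,
        (exists B1 B2 B3, [/\ common_eigenbasis C1 B1, common_eigenbasis C2 B2
                            & common_eigenbasis C3 B3]) &
        (forall B1 B2 B3, common_eigenbasis C1 B1 -> common_eigenbasis C2 B2 ->
           common_eigenbasis C3 B3 ->
           weakly_unextendible [:: B1; B2; B3])].
Proof.
move=> /max_commuting_class_table[c1 ->] /max_commuting_class_table[c2 ->] /class_disjointP d12.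
have [c3 [d31 d32 meets]] := unextendible_third_class d12.
exists (pauli_class c3); split.
- exact: pauli_class_max.
- exact/class_disjointP.
- exact/class_disjointP.
- by exists (class_basis c1), (class_basis c2), (class_basis c3); split; apply: class_basis_common.
- move=> B1 B2 B3 eigB1 eigB2 eigB3; split.
    apply: mutually_unbiased3; [apply: class_eigenbases_unbiased _ eigB1 eigB2
      | apply: class_eigenbases_unbiased _ eigB1 eigB3
      | apply: class_eigenbases_unbiased _ eigB2 eigB3]; by rewrite // class_disjointC.
  case=> _ [B [/max_commuting_class_table[c ->] [eigB unbB]]].
  have [p cp] := meets c; case/or3P => c'p.
  - by apply: (meeting_classes_biased c'p cp eigB1 eigB); apply: unbB; rewrite inE eqxx.
  - by apply: (meeting_classes_biased c'p cp eigB2 eigB); apply: unbB; rewrite !inE eqxx orbT.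
  - by apply: (meeting_classes_biased c'p cp eigB3 eigB); apply: unbB; rewrite !inE eqxx !orbT.
Qed.
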